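(* Let $R$ be a commutative ring such that for every $a\in R$, either $a$ or $1-a$ is a stable element. Then $R$ is locally stable.
   Context: All rings are commutative with identity. A ring $S$ has stable range 1 if whenever $a,b\in S$ with $aS+bS=S$ there is $y\in S$ with $a+by$ a unit. An element $a\in R$ is stable if the ring $R/aR$ has stable range 1. $R$ is locally stable if whenever $a,b\in R$ with $aR+bR=R$ there is $y\in R$ such that $a+by$ is stable. *)

From mathcomp Require Import all_boot all_algebra.
Set Implicit Arguments. Unset Strict Implicit. Unset Printing Implicit Defensive.
Import GRing.Theory.
Local Open Scope ring_scope.

Definition congr_mod (R : comPzRingType) (a x y : R) : Prop :=
  exists t : R, x - y = a * t.

Definition unit_mod (R : comPzRingType) (a x : R) : Prop :=
  exists w : R, congr_mod a (x * w) 1.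

(* The ring R/aR has stable range 1, written out on representatives:
   whenever (x mod a)(R/aR) + (y mod a)(R/aR) = R/aR, i.e. x*u + y*v = 1
   mod aR for some u v, there is z with x + y*z a unit of R/aR.
   (Every element of R/aR is the class of some element of R.) *)
Definition quot_stable_range1 (R : comPzRingType) (a : R) : Prop :=
  forall x y : R,
    (exists u v : R, congr_mod a (x * u + y * v) 1) ->
    exists z : R, unit_mod a (x + y * z).

Definition stable_elt (R : comPzRingType) (a : R) : Prop := quot_stable_range1 a.

Definition locally_stable (R : comPzRingType) : Prop :=
  forall a b : R, (exists u v : R, a * u + b * v = 1) ->
    exists y : R, stable_elt (a + b * y).

From mathcomp Require Import all_boot all_algebra.
From mathcomp Require Import ring.

Set Implicit Arguments.
Unset Strict Implicit.
Unset Printing Implicit Defensive.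

Import GRing.Theory.
Local Open Scope ring_scope.

(* R/aR is a quotient of R/asR, and stable range 1 passes to quotients.  Given
   a u + b v = 1, either a(u - 1) is stable, and then so is a, or
   1 - a(u - 1) = a + b v is stable. *)

Section CongruenceModPrincipal.

Variables (R : comPzRingType) (a : R).

Lemma congr_mod_refl (x : R) : congr_mod a x x.
Proof. by exists 0; rewrite subrr mulr0. Qed.

Lemma congr_mod_trans (x y z : R) :
  congr_mod a x y -> congr_mod a y z -> congr_mod a x z.
Proof.
move=> [s Hxy] [t Hyz]; exists (s + t).
by rewrite mulrDr -Hxy -Hyz addrA subrK.
Qed.

Lemma congr_mod_mulr (s x y : R) : congr_mod (a * s) x y -> congr_mod a x y.
Proof. by move=> [t Ht]; exists (s * t); rewrite Ht mulrA. Qed.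

Lemma unit_mod_mulr (s x : R) : unit_mod (a * s) x -> unit_mod a x.
Proof. by move=> [w Hw]; exists w; exact: congr_mod_mulr Hw. Qed.

Lemma unit_mod_congr (x y : R) :
  congr_mod a x y -> unit_mod a y -> unit_mod a x.
Proof.
move=> [t Ht] [w Hw]; exists w; apply: congr_mod_trans Hw.
by exists (t * w); rewrite -mulrBl Ht mulrA.
Qed.

End CongruenceModPrincipal.

Lemma stable_elt_mulr (R : comPzRingType) (a s : R) :
  stable_elt (a * s) -> stable_elt a.
Proof.
move=> Hstab x y [u [v [t Ht]]].
(* [y v - a t] represents the class of [y v] mod a and completes [x u] to 1 exactly. *)
pose y' := y * v - a * t.
have Hy' : x * u + y' * 1 = 1.
  have -> : x * u + y' * 1 = (x * u + y * v - 1) - a * t + 1 by rewrite /y'; ring.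
  by rewrite Ht subrr add0r.
have [|z Hz] := Hstab x y'.
  by exists u, 1; rewrite Hy'; exact: congr_mod_refl.
exists (v * z); apply: unit_mod_congr (unit_mod_mulr Hz).
by exists (t * z); rewrite /y'; ring.
Qed.

Theorem theorem2p9 (R : comPzRingType) :
  (forall a : R, stable_elt a \/ stable_elt (1 - a)) -> locally_stable R.
Proof.
move=> Hstab a b [u [v Huv]].
case: (Hstab (a * (u - 1))) => [Hs | Hs].
  by exists 0; rewrite mulr0 addr0; exact: stable_elt_mulr Hs.
exists v.
have -> : a + b * v = (a * u + b * v) - a * (u - 1) by ring.
by rewrite Huv.
Qed.
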